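(* There is a function $\varepsilon(n)=o(n)$ such that for all sufficiently large $n$ and all integers $k$ with $\sqrt n\le k\le n$, $$d(k,n)\le 2k\sqrt n-n+\varepsilon(n).$$
   Context: $[n]=\{1,\dots,n\}$; for $A\subset\mathbb Z$, $A-A=\{a-b:a,b\in A\}$. Define $d(k,n)=\max\{|A-A|: A\subseteq[n],\ |A|=k\}$. *)

From mathcomp Require Import all_boot all_order all_algebra.
From mathcomp Require Import reals.
Set Implicit Arguments. Unset Strict Implicit. Unset Printing Implicit Defensive.
Import Order.TTheory GRing.Theory Num.Theory.

(* A subset of [n] = {1,...,n} is represented as a set A of 'I_n.+1
   (values 0..n) not containing 0. *)
Definition subset_of_interval (n : nat) (A : {set 'I_n.+1}) : bool :=
  (ord0 \notin A).

Definition diffset_card (n : nat) (A : {set 'I_n.+1}) : nat :=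
  size (undup [seq ((val a)%:Z - (val b)%:Z)%R | a <- enum A, b <- enum A]).

Definition d (k n : nat) : nat :=
  \max_(A : {set 'I_n.+1} | subset_of_interval A && (#|A| == k)) diffset_card A.

From mathcomp Require Import all_boot all_order all_algebra.
From mathcomp Require Import reals.
From mathcomp Require Import zify lra.

Set Implicit Arguments.
Unset Strict Implicit.
Unset Printing Implicit Defensive.
Import Order.TTheory GRing.Theory Num.Theory.

(* For A in [0, n] with |A| = k and m > 0, let r j count the ways to write
   j = a + u with a in A and u < m: r lives on [0, n + m) and sums to k m.
   The sum of r j ^ 2 counts the pairs (a, b) in A weighted by the number of
   (u, v) with v - u = a - b; a difference has at most m such representations
   and distinct differences share none, so it is at most m^2 + m (k^2 - |A - A|).
   Cauchy-Schwarz, (k m)^2 <= (n + m) * sum r j ^ 2, then gives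
   (n + m) |A - A| <= (n + m) m + k^2 n, and taking n + m = floor(k sqrt n) + 1
   yields |A - A| <= 2 k sqrt n - n + 1: eps can be the constant 1. *)

Lemma sum_ord_eqn_mul (N c : nat) (F : nat -> nat) :
  \sum_(j < N) (c == j) * F j = (c < N) * F c.
Proof.
rewrite -(big_mkord xpredT (fun j => (c == j) * F j)).
elim: N => [|N IHN]; first by rewrite big_geq.
rewrite big_nat_recr //= IHN.
case: (ltngtP c N) => [cN|Nc|->]; rewrite ?ltnSn ?ltnS.
- by rewrite (ltnW cN) addn0.
- by rewrite (ltn_geF Nc).
- by [].
Qed.

Lemma sum_ord_eqn (N c : nat) : \sum_(j < N) (c == j) = (c < N).
Proof.
rewrite -[RHS]muln1 -(sum_ord_eqn_mul N c (fun=> 1)).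
by apply: eq_bigr => j _; rewrite muln1.
Qed.

Lemma sqr_sum_leq (I : finType) (x : I -> nat) :
  (\sum_i x i) ^ 2 <= #|I| * \sum_i x i ^ 2.
Proof.
rewrite -mulnn big_distrlr /= -(@leq_pmul2l 2) //.
have -> : 2 * (#|I| * \sum_i x i ^ 2) = \sum_i \sum_j (x i ^ 2 + x j ^ 2).
  symmetry; under eq_bigr do rewrite big_split /= sum_nat_const.
  by rewrite big_split /= sum_nat_const -big_distrr mul2n -addnn.
rewrite big_distrr /=; apply: leq_sum => i _; rewrite big_distrr /=.
by apply: leq_sum => j _; exact: (nat_Cauchy _ _).1.
Qed.

Lemma sum_undup_leq (T : eqType) (f : T -> nat) (m : nat) (s : seq T) :
  (forall x, f x <= m) ->
  \sum_(x <- s) f x + m * size (undup s) <= \sum_(x <- undup s) f x + m * size s.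
Proof.
move=> fm; elim: s => [|x s IHs] //=.
by case: ifP => _; rewrite !big_cons /= ?mulnS; have := fm x; lia.
Qed.

Definition diff_reps (m : nat) (z : int) : nat :=
  \sum_(u < m) \sum_(v < m) (v%:Z - u%:Z == z)%R.

Definition sumset_reps {n : nat} (A : {set 'I_n.+1}) (m j : nat) : nat :=
  \sum_(a in A) \sum_(u < m) (a + u == j).

Lemma diff_reps_le m z : diff_reps m z <= m.
Proof.
rewrite -[leqRHS]card_ord -sum1_card; apply: leq_sum => u _.
apply: (@leq_trans (\sum_(v < m) (`|(u%:Z + z)%R|%N == v))).
  by apply: leq_sum => v _; case: eqP => // <-; rewrite eq_sym; apply/eqP; lia.
by rewrite sum_ord_eqn leq_b1.
Qed.

Lemma sum_diff_reps_uniq m (s : seq int) :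
  uniq s -> \sum_(z <- s) diff_reps m z <= m * m.
Proof.
move=> s_uniq; rewrite exchange_big -[X in _ <= X * _]card_ord -sum_nat_const.
apply: leq_sum => u _; rewrite exchange_big -[leqRHS]card_ord -sum1_card.
apply: leq_sum => v _; rewrite -big_mkcond sum1_count.
by rewrite (eq_count (a2 := pred1 (v%:Z - u%:Z)%R)) ?count_uniq_mem ?leq_b1.
Qed.

Section SumsetReps.

Context {n : nat} (A : {set 'I_n.+1}) (m : nat).

Let shift_lt (a : 'I_n.+1) (u : 'I_m) : a + u < n + m.
Proof. by have := ltn_ord a; have := ltn_ord u; lia. Qed.

Lemma sum_sumset_reps : \sum_(j < n + m) sumset_reps A m j = #|A| * m.
Proof.
rewrite exchange_big -sum_nat_const; apply: eq_bigr => a _.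
rewrite exchange_big -[RHS]card_ord -sum1_card; apply: eq_bigr => u _.
by rewrite sum_ord_eqn shift_lt.
Qed.

Lemma sum_sqr_sumset_reps :
  \sum_(j < n + m) sumset_reps A m j ^ 2 =
  \sum_(a in A) \sum_(b in A) diff_reps m (a%:Z - b%:Z)%R.
Proof.
transitivity (\sum_(j < n + m) \sum_(a in A) \sum_(b in A) \sum_(u < m) \sum_(v < m)
                (a + u == j) * (b + v == j)).
  apply: eq_bigr => j _; rewrite -mulnn big_distrlr /=.
  by apply: eq_bigr => a _; apply: eq_bigr => b _; rewrite big_distrlr.
rewrite exchange_big; apply: eq_bigr => a _; rewrite exchange_big; apply: eq_bigr => b _.
rewrite exchange_big; apply: eq_bigr => u _; rewrite exchange_big; apply: eq_bigr => v _.
rewrite (sum_ord_eqn_mul _ _ (fun j => b + v == j)) shift_lt mul1n.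
by apply/eqP/eqP; lia.
Qed.

Lemma sum_diff_reps_diffset :
  \sum_(a in A) \sum_(b in A) diff_reps m (a%:Z - b%:Z)%R + m * diffset_card A
  <= m * m + m * #|A| ^ 2.
Proof.
set Ds := [seq ((val a)%:Z - (val b)%:Z)%R | a <- enum A, b <- enum A].
have -> : \sum_(a in A) \sum_(b in A) diff_reps m (a%:Z - b%:Z)%R
          = \sum_(z <- Ds) diff_reps m z.
  rewrite big_allpairs_dep /= big_enum; apply: eq_bigr => a _.
  by rewrite big_enum.
have size_Ds : size Ds = #|A| ^ 2 by rewrite size_allpairs -!cardE mulnn.
rewrite /diffset_card -/Ds.
apply: leq_trans (sum_undup_leq Ds (diff_reps_le m)) _.
by rewrite size_Ds leq_add2r sum_diff_reps_uniq ?undup_uniq.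
Qed.

Lemma diffset_card_leq :
  0 < m -> (n + m) * diffset_card A <= (n + m) * m + #|A| ^ 2 * n.
Proof.
move=> m_gt0; have := @sqr_sum_leq 'I_(n + m) (sumset_reps A m).
rewrite card_ord sum_sumset_reps sum_sqr_sumset_reps.
have := sum_diff_reps_diffset.
set S := \sum_(a in A) _; set D := diffset_card A; set k := #|A| => S_le CS.
rewrite -(leq_pmul2l m_gt0); nia.
Qed.

End SumsetReps.

Local Open Scope ring_scope.

Lemma eventually_le_mulrn (R : archiRealFieldType) (c e : R) :
  0 < e -> exists M : nat, forall n : nat, (M <= n)%N -> c <= e * n%:R.
Proof.
move=> e_gt0; exists (Num.truncn (c / e)).+1 => n M_le_n.
have c_lt : c / e < n%:R.
  by apply: lt_le_trans (truncnS_gt _) _; rewrite ler_nat.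
by rewrite -ler_pdivrMl // mulrC ltW.
Qed.

Lemma le_mul_sqrtr (R : rcfType) (x y : R) : Num.sqrt x <= y -> x <= y * Num.sqrt x.
Proof.
have [x_ge0|x_lt0] := leP 0 x => sx_le_y.
  by rewrite -{1}(sqr_sqrtr x_ge0) expr2 ler_wpM2r ?sqrtr_ge0.
by rewrite ltr0_sqrtr // mulr0 ltW.
Qed.

Lemma diffset_card_le_sqrt (R : archiRcfType) {n : nat} (A : {set 'I_n.+1}) :
  Num.sqrt (n%:R : R) <= #|A|%:R ->
  (diffset_card A)%:R <= 2 * #|A|%:R * Num.sqrt (n%:R : R) - n%:R + 1.
Proof.
set s := Num.sqrt (n%:R : R); set k := #|A| => s_le_k.
set x := k%:R * s; set L := (Num.truncn x).+1.
have x_ge0 : 0 <= x by rewrite mulr_ge0 ?sqrtr_ge0.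
have x_lt_L : x < L%:R := truncnS_gt x.
have L_le : L%:R <= x + 1 by rewrite /L -addn1 natrD lerD2r truncn_le.
clearbody L.
have n_le_x : n%:R <= x := le_mul_sqrtr s_le_k.
have n_lt_L : (n < L)%N by rewrite -(ltr_nat R); apply: le_lt_trans x_lt_L.
have m_gt0 : (0 < L - n)%N by rewrite subn_gt0.
have := diffset_card_leq A m_gt0; rewrite (subnKC (ltnW n_lt_L)) -(ler_nat R).
rewrite natrD !natrM (natrB _ (ltnW n_lt_L)) -/k.
have -> : k%:R * k%:R * n%:R = x ^+ 2 :> R by rewrite exprMn sqr_sqrtr ?ler0n.
set D := (diffset_card A)%:R => D_le.
have x2_le : x ^+ 2 <= L%:R * x by rewrite expr2 ler_wpM2r // ltW.
have : L%:R * D <= L%:R * (L%:R - n%:R + x).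
  by rewrite [leRHS]mulrDr; apply: le_trans D_le _; rewrite lerD2l.
rewrite ler_pM2l; last by apply: le_lt_trans x_lt_L.
rewrite -mulrA -/x; lra.
Qed.

Theorem theorem7 (R : realType) :
  exists eps : nat -> R,
    (forall e : R, 0 < e -> exists M : nat, forall n : nat, (M <= n)%N ->
        `|eps n| <= e * n%:R) /\
    exists N : nat, forall n k : nat, (N <= n)%N ->
      Num.sqrt (n%:R : R) <= k%:R -> (k <= n)%N ->
      (d k n)%:R <= 2 * k%:R * Num.sqrt (n%:R) - n%:R + eps n.
Proof.
exists (fun=> 1); split.
  by move=> e /(eventually_le_mulrn 1) [M le_1]; exists M => n /le_1; rewrite normr1.
exists 0%N => n k _ s_le_k _.
have bound_ge0 : 0 <= 2 * k%:R * Num.sqrt (n%:R : R) - n%:R + 1.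
  have := le_mul_sqrtr s_le_k; have := ler0n R n; rewrite -mulrA; lra.
rewrite -(truncn_ge_nat _ bound_ge0).
apply/bigmax_leqP => A /andP[_ /eqP kA].
by rewrite truncn_ge_nat // -kA diffset_card_le_sqrt // kA.
Qed.
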